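(* Let $G$ be a query graph that is splittable and f-closed. Then for every sink $C\in\mathrm{Eq}$, $C^+=C^{\oplus}$.
   Context: $G=G[Q]$ is the query graph of a Boolean CQ without self-joins with atoms $R(u,v)$, $u\ne v$, first attribute the key: vertices are variables, each atom gives an edge $e_R=(u_R,v_R)$, consistent/inconsistent according to the type of $R$; $E^i$ = inconsistent edges. Paths may have zero edges. $x\to y$: a directed path with only consistent edges; $x\leadsto y$: any directed path; undirected paths ignore directions. For a path $P$ and vertex set $N$, $P\cap N$ is the set of vertices of $P$ in $N$. $u^{\oplus}=\{v:u\to v\}$, $u^+=\{v:u\leadsto v\}$, $u^{+,R}=\{v: u\leadsto v$ in $G-\{e_R\}\}$. For $R,S\in E^i$: $R\sim S$ iff $u_S\in u_R^+$ and $u_R\in u_S^+$; $[R]$ the class of $R$; $coupled^+(R)=[R]\cup\{S\in E^i:\exists$ undirected path $P$ from $v_R$ to $u_S$ with $P\cap u_R^{+,R}=\emptyset\}$; $G$ is splittable if there are no $R,S\in E^i$ with $R\in coupled^+(S)$, $S\in coupled^+(R)$ and $R\not\sim S$. $\mathrm{Eq}$ is the set of $\sim$-classes of $E^i$; for $C\in\mathrm{Eq}$, $C^{\oplus}=\bigcap_{R\in C}u_R^{\oplus}$ and $C^+=\bigcap_{R\in C}u_R^{+,R}$. $C_1<^{\oplus}C_2$ iff $C_1\ne C_2$ and some $S\in C_2$ has $u_S\in C_1^{\oplus}$; a sink is a maximal element of $<^{\oplus}$. $G$ is f-closed if for every $R\in E^i$, $v_R^{\oplus}\cap u_R^{+,R}\subseteq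 u_R^{\oplus}$. *)

(* Query graph of a self-join-free Boolean CQ with binary atoms. *)
From mathcomp Require Import all_boot.
Unset Printing Implicit Defensive.

Section QueryGraph.
(* V : variables (vertices); A : atoms (one per relation name, no self-joins).
   Atom R gives the directed edge e_R = (u R, v R); inc R means R is inconsistent. *)
Variables (V A : finType) (u v : A -> V) (inc : pred A).

Definition estep (P : pred A) : rel V :=
  fun x y => [exists R, [&& P R, u R == x & v R == y]].

Definition creach (x y : V) : bool := connect (estep (fun R => ~~ inc R)) x y.
Definition reach (x y : V) : bool := connect (estep predT) x y.
Definition reach_wo (R : A) (x y : V) : bool := connect (estep (fun S => S != R)) x y.

Definition oplus (x : V) : {set V} := [set y | creach x y].
Definition plus (x : V) : {set V} := [set y | reach x y].
Definition plusR (R : A) : {set V} := [set y | reach_wo R (u R) y].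

(* R ~ S (intended for R, S in E^i) *)
Definition sim (R S : A) : bool := (u S \in plus (u R)) && (u R \in plus (u S)).

Definition upath_avoid (N : {set V}) (x y : V) : bool :=
  (x \notin N) &&
  connect (fun a b => [&& a \notin N, b \notin N & estep predT a b || estep predT b a]) x y.

Definition coupled (R S : A) : bool :=
  inc S && (sim R S || upath_avoid (plusR R) (v R) (u S)).

Definition splittable : Prop :=
  forall R S, inc R -> inc S -> coupled R S -> coupled S R -> sim R S.

Definition f_closed : Prop :=
  forall R, inc R ->
  (oplus (v R) :&: plusR R) \subset oplus (u R).

Definition is_class (C : {set A}) : Prop :=
  exists2 R, inc R & C = [set S | inc S && sim R S].

Definition Coplus (C : {set A}) : {set V} := \bigcap_(R in C) oplus (u R).
Definition Cplus (C : {set A}) : {set V} := \bigcap_(R in C) plusR R.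

Definition ltC (C1 C2 : {set A}) : Prop :=
  C1 != C2 /\ exists2 S, S \in C2 & u S \in Coplus C1.

Definition is_sink (C : {set A}) : Prop :=
  is_class C /\ ~ (exists2 C2, is_class C2 & ltC C C2).

End QueryGraph.

From mathcomp Require Import all_boot.

(* The inclusion C^(+) <= C^+ is immediate: a consistent path from u_R never
   uses the inconsistent edge e_R.  For the converse let y be in C^+ and fix
   R in C with a path from u_R to y avoiding e_R.  By induction on its length
   we show u_R -> y.  Otherwise take the LAST inconsistent edge e_S of the
   path whose head u_S does not consistently reach y, while v_S -> y.  By
   f-closedness y is not in u_S^{+,S}, so S is not in C.  If u_S lies outside
   some u_R'^{+,R'} (R' in C), then S and R' are coupled both ways, hence
   equivalent by splittability, contradicting S not in C.  So u_S is in C^+,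
   the shorter prefix gives u_R -> u_S, and f-closedness propagates this to
   every member of C: u_S is in C^(+), which for a sink forces S in C. *)

Set Implicit Arguments.
Unset Strict Implicit.
Unset Printing Implicit Defensive.

(* A set closed under a relation is never left along its paths, so a path
   ending outside such a set lies entirely outside it. *)
Section ClosedSets.
Variables (T : finType) (e : rel T) (N : {set T}).
Hypothesis closedN : forall z w, z \in N -> e z w -> w \in N.

Lemma connect_outside a b : connect e a b -> b \notin N ->
  (a \notin N) && connect [rel p q | [&& p \notin N, q \notin N & e p q]] a b.
Proof.
move=> /connectP [p hp ->]; elim: p a hp => [|c p IH] a /=.
  by move=> _ hb; rewrite hb connect0.
move=> /andP [hac hp] hb; have /andP [hc hcon] := IH c hp hb.
have ha : a \notin N by apply: contra hc => ha; exact: closedN ha hac.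
by rewrite ha (connect_trans _ hcon) // connect1 //= ha hc.
Qed.

End ClosedSets.

Section QueryGraph.
Variables (V A : finType) (u v : A -> V) (inc : pred A).

Local Notation step := (estep V A u v).
Local Notation cr := (creach V A u v inc).
Local Notation Rplus := (plusR V A u v).
Local Notation simR := (sim V A u v).

Lemma stepP (P : pred A) x y :
  reflect (exists2 T, P T & u T = x /\ v T = y) (step P x y).
Proof.
apply: (iffP existsP) => [[T /and3P [hP /eqP <- /eqP <-]]|[T hP [<- <-]]].
  by exists T.
by exists T; rewrite hP !eqxx.
Qed.

Lemma step_edge (P : pred A) T : P T -> connect (step P) (u T) (v T).
Proof. by move=> hP; apply: connect1; apply/stepP; exists T. Qed.

Lemma connect_step_sub (P Q : pred A) : (forall T, P T -> Q T) ->
  forall x y, connect (step P) x y -> connect (step Q) x y.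
Proof.
move=> hPQ; apply: connect_sub => x y /stepP [T /hPQ hQ [<- <-]].
exact: step_edge.
Qed.

Lemma creach_wo S x y : inc S -> cr x y -> reach_wo V A u v S x y.
Proof.
by move=> hS; apply: connect_step_sub => T hT; apply: contraNneq hT => ->.
Qed.

Lemma connect_split_edge R a b : connect (step predT) a b ->
  reach_wo V A u v R a b \/ reach_wo V A u v R (v R) b.
Proof.
move=> /connectP [p hp ->]; elim: p a hp => [|c p IH] a /=.
  by move=> _; left; apply: connect0.
move=> /andP [hac hp]; case: (IH c hp) => [h|h]; last by right.
move/stepP: hac h => [T _ [<- <-]] h.
have [eTR|nTR] := eqVneq T R; first by rewrite eTR in h *; right.
by left; apply: connect_trans h; apply: step_edge.
Qed.

Lemma connect_avoid_edge (P : pred A) S a b : connect (step P) a b ->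
  ~~ connect (step P) a (u S) -> connect (step [pred T | P T & T != S]) a b.
Proof.
move=> /connectP [p hp ->]; elim: p a hp => [|c p IH] a /=.
  by move=> _ _; apply: connect0.
move=> /andP [hac hp] hn.
have hc : ~~ connect (step P) c (u S).
  by apply: contra hn; apply: connect_trans; apply: connect1.
apply: connect_trans (IH c hp hc); move/stepP: hac hn => [T hT [<- <-]] hn.
have [eTS|nTS] := eqVneq T S; first by rewrite eTS connect0 in hn.
by apply: step_edge; rewrite /= hT nTS.
Qed.

Lemma last_entry (P : pred A) x a p :
  path (step P) a p -> cr (last a p) x -> ~~ cr a x ->
  exists S q, [/\ P S, inc S, path (step P) a q, last a q = u S & size q < size p]
    /\ [/\ ~~ cr (u S) x, cr (v S) x & connect (step P) (v S) (last a p)].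
Proof.
elim: p a => [|c p IH] a /=; first by move=> _ ->.
move=> /andP [hac hp] hl hna; have [hc|hc] := boolP (cr c x).
  move/stepP: hac hna hc hp => [T hP [<- <-]] hna hc hp.
  have hT : inc T.
    by apply: contraR hna => hT; apply: connect_trans hc; apply: step_edge.
  by exists T, [::]; split; split=> //; apply/connectP; exists p.
have [S [q [[hPS hS hq hlq hsq] hrest]]] := IH c hp hl hc.
by exists S, (c :: q); split=> //; split; rewrite //= ?hac.
Qed.

Lemma sim_refl R : simR R R.
Proof. by rewrite /sim !inE /reach connect0. Qed.

Lemma sim_sym R S : simR R S -> simR S R.
Proof. by rewrite /sim andbC. Qed.

Lemma sim_trans R S T : simR R S -> simR S T -> simR R T.
Proof.
rewrite /sim !inE /reach => /andP [h1 h2] /andP [h3 h4].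
by rewrite (connect_trans h1 h3) (connect_trans h4 h2).
Qed.

Lemma plusR_closed R z w : z \in Rplus R -> step (fun S => S != R) z w ->
  w \in Rplus R.
Proof. by rewrite !inE => hz hzw; apply: connect_trans hz (connect1 hzw). Qed.

Definition urel (N : {set V}) : rel V :=
  fun a b => [&& a \notin N, b \notin N & step predT a b || step predT b a].

Lemma urel_sym N : symmetric (urel N).
Proof. by move=> a b; rewrite /urel orbC andbCA. Qed.

Lemma upath_of_path S a b : reach_wo V A u v S a b -> b \notin Rplus S ->
  (a \notin Rplus S) && connect (urel (Rplus S)) a b.
Proof.
move=> hab hb; have /andP [-> hc] := connect_outside (@plusR_closed S) hab hb.
apply: connect_sub hc => p q /and3P [hp hq hpq].
apply: connect1; rewrite /urel hp hq; move/stepP: hpq => [T _ hT].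
by apply/orP; left; apply/stepP; exists T.
Qed.

(* If u_S is reachable from u_R but lies outside u_R^{+,R}, then every such
   path passes through v_R and its tail avoids u_R^{+,R}: S is coupled to R. *)
Lemma coupled_forward R S : inc S -> connect (step predT) (u R) (u S) ->
  u S \notin Rplus R -> coupled V A u v inc R S.
Proof.
move=> hS huS hn; rewrite /coupled hS /=; apply/orP; right.
case: (connect_split_edge R huS) => h; first by rewrite inE h in hn.
by have /andP [hv hc] := upath_of_path h hn; rewrite /upath_avoid hv.
Qed.

(* If y lies in u_R^{+,R} but not in u_S^{+,S}, v_S -> y, and u_S is outside
   u_R^{+,R}, then both u_R and v_S reach y outside u_S^{+,S}, which gives an
   undirected path from v_S to u_R avoiding it: R is coupled to S. *)
Lemma coupled_backward R S y : inc R -> inc S -> y \in Rplus R ->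
  y \notin Rplus S -> cr (v S) y -> u S \notin Rplus R -> coupled V A u v inc S R.
Proof.
move=> hR hS hyR hyS hvSy hn; rewrite /coupled hR /=; apply/orP; right.
have /andP [hvS hvy] := upath_of_path (creach_wo hS hvSy) hyS.
rewrite !inE in hyR hn.
have hRy : reach_wo V A u v S (u R) y.
  by apply: connect_step_sub (connect_avoid_edge hyR hn) => T /andP [].
have /andP [_ hRy'] := upath_of_path hRy hyS.
rewrite /upath_avoid hvS /=; apply: connect_trans hvy _.
by rewrite (sym_connect_sym (@urel_sym _)).
Qed.

Hypothesis hfc : f_closed V A u v inc.

Lemma fclosed_creach S x : inc S -> cr (v S) x -> x \in Rplus S -> cr (u S) x.
Proof.
move=> hS hvx hx; have := subsetP (hfc hS) x.
by rewrite !inE hvx; apply; rewrite inE in hx.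
Qed.

Section Class.
Variables (C : {set A}) (R0 : A).
Hypothesis hR0 : inc R0.
Hypothesis hC : C = [set S | inc S && simR R0 S].

Lemma class_inc R : R \in C -> inc R.
Proof. by rewrite hC inE => /andP []. Qed.

Lemma class_sim R S : R \in C -> S \in C -> simR R S.
Proof.
rewrite hC !inE => /andP [_ h1] /andP [_ h2].
exact: sim_trans (sim_sym h1) h2.
Qed.

Lemma class_mem R S : R \in C -> inc S -> simR R S -> S \in C.
Proof.
move=> hR hS hRS; move: (hR); rewrite hC !inE hS => /andP [_ h].
exact: sim_trans h hRS.
Qed.

Lemma class_reach R S : R \in C -> S \in C -> connect (step predT) (u R) (u S).
Proof. by move=> hR hS; have /andP [] := class_sim hR hS; rewrite inE. Qed.

Lemma Cplus_mem x R : x \in Cplus V A u v C -> R \in C -> x \in Rplus R.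
Proof. by move/bigcapP; apply. Qed.

Lemma Coplus_sub_Cplus : Coplus V A u v inc C \subset Cplus V A u v C.
Proof.
apply/subsetP => x /bigcapP hx; apply/bigcapP => R hR.
by move: (hx R hR); rewrite !inE; apply: creach_wo (class_inc hR).
Qed.

(* For x in C^+, if one member of C consistently reaches x, all do: the last
   entry on a path u_R' ~> u_R would be an edge equivalent to R violating
   f-closedness. *)
Lemma class_creach x R R' : x \in Cplus V A u v C -> R \in C -> cr (u R) x ->
  R' \in C -> cr (u R') x.
Proof.
move=> hx hR hRx hR'; apply: contraT => hn.
have /connectP [p hp hl] := class_reach hR' hR.
have := @last_entry predT x (u R') p hp; rewrite -hl => /(_ hRx hn).
move=> [S [q [[_ hS hq hlq _] [hnS hvS hvR]]]].
have hSC : S \in C.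
  apply: (class_mem hR' hS); rewrite /sim !inE; apply/andP; split.
    by rewrite -hlq; apply/connectP; exists q.
  apply: connect_trans (class_reach hR hR'); apply: connect_trans hvR.
  exact: step_edge.
by rewrite (fclosed_creach hS hvS (Cplus_mem hx hSC)) in hnS.
Qed.

Hypothesis hsplit : splittable V A u v inc.
Hypothesis hsink : ~ (exists2 C2, is_class V A u v inc C2 & ltC V A u v inc C C2).

(* In a sink, an inconsistent S with u_S in C^(+) belongs to C: otherwise its
   class would lie strictly above C. *)
Lemma sink_mem S : inc S -> u S \in Coplus V A u v inc C -> S \in C.
Proof.
move=> hS hSo; set C2 := [set T | inc T && simR S T].
have [->|neq] := eqVneq C C2; first by rewrite inE hS sim_refl.
have hSC2 : S \in C2 by rewrite inE hS sim_refl.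
by case: hsink; exists C2; [exists S | split=> //; exists S].
Qed.

(* An inconsistent edge reachable from C through which y in C^+ is entered,
   with y outside u_S^{+,S}, has its head in C^+: otherwise S would be coupled
   both ways with a member of C, hence equivalent to it by splittability. *)
Lemma entry_in_Cplus R S y : R \in C -> inc S ->
  connect (step predT) (u R) (u S) -> cr (v S) y ->
  y \in Cplus V A u v C -> y \notin Rplus S -> u S \in Cplus V A u v C.
Proof.
move=> hR hS huS hvSy hy hyS; apply/bigcapP => R' hR'; apply: contraT => hn.
have hR'S := connect_trans (class_reach hR' hR) huS.
have hsim := hsplit (class_inc hR') hS (coupled_forward hS hR'S hn)
  (coupled_backward (class_inc hR') hS (Cplus_mem hy hR') hyS hvSy hn).
by move: hyS; rewrite (Cplus_mem hy (class_mem hR' hS hsim)).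
Qed.

Lemma class_path_creach R p : R \in C -> path (step (fun S => S != R)) (u R) p ->
  last (u R) p \in Cplus V A u v C -> cr (u R) (last (u R) p).
Proof.
move=> hR; have [n] := ubnP (size p); elim: n p => // n IH p.
rewrite ltnS => hsz hp hy; apply: contraT => hn.
have [S [q [[_ hS hq hlq hsq] [hnS hvS _]]]] := last_entry hp (connect0 _ _) hn.
set y := last (u R) p in hy hn hnS hvS.
have hyS : y \notin Rplus S by apply: contra hnS; apply: fclosed_creach hS hvS.
have huS : connect (step predT) (u R) (u S).
  apply: (@connect_step_sub (fun T => T != R)) => //.
  by rewrite -hlq; apply/connectP; exists q.
have hUS := entry_in_Cplus hR hS huS hvS hy hyS.
have hRS : cr (u R) (u S).
  by rewrite -hlq; apply: IH; rewrite ?hlq //; apply: leq_trans hsq hsz.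
have hSo : u S \in Coplus V A u v inc C.
  by apply/bigcapP => R' hR'; rewrite inE; apply: class_creach hUS hR hRS hR'.
by move: hyS; rewrite (Cplus_mem hy (sink_mem hS hSo)).
Qed.

Lemma Cplus_sub_Coplus : Cplus V A u v C \subset Coplus V A u v inc C.
Proof.
apply/subsetP => y hy; have hR0C : R0 \in C by rewrite hC inE hR0 sim_refl.
have := Cplus_mem hy hR0C; rewrite inE => /connectP [p hp hl].
have hc := class_path_creach hR0C hp; rewrite -hl in hc.
by apply/bigcapP => R hR; rewrite inE; apply: class_creach hy hR0C (hc hy) hR.
Qed.

End Class.
End QueryGraph.

Theorem proposition5p5 (V A : finType) (u v : A -> V) (inc : pred A)
  (huv : forall R, u R != v R)
  (hsplit : splittable V A u v inc) (hfc : f_closed V A u v inc) :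
  forall C : {set A}, is_sink V A u v inc C -> Cplus V A u v C = Coplus V A u v inc C.
Proof.
move=> C [[R0 hR0 hC] hsink]; apply/eqP; rewrite eqEsubset.
by rewrite (Cplus_sub_Coplus hfc hR0 hC hsplit hsink) (Coplus_sub_Cplus hC).
Qed.
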